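(* Let $\lambda$ be an infinite cardinal, $\theta$ an infinite regular cardinal with $\theta<\lambda$, and $\chi$ either $2$ or an infinite cardinal. Then: (1) $\lambda\le m(\theta,\lambda)\le\min\{\mathrm{cf}([\lambda]^\theta,\subseteq),\mathrm{cf}([\lambda]^\theta,\supseteq)\}$; (2) if $\chi\le\theta^+$, then $m(\theta,\lambda)\le m(\theta,\lambda,\theta,\chi)$; (3) $m(\theta,\theta,\theta,\chi)\le m(\lambda,\lambda,\theta,\chi)\le\max\{m(\theta,\theta,\theta,\chi),m(\theta,\lambda)\}$.
   Context: $m(\theta,\lambda)$ is the least size of $\mathcal Y\subseteq[\lambda]^\theta$ such that every $X\in[\lambda]^\theta$ meets some $Y\in\mathcal Y$ in a set of size $\theta$. For a set $\Delta$ with $|\Delta|\ge\theta$, $m(\Delta,\lambda,\theta,\chi)$ is the least size of a family $\mathcal H$ of functions from $\Delta$ to $[\lambda]^{<\chi}$ such that for every $X\in[\Delta]^\theta$ and every $g:X\to\lambda$ there is $h\in\mathcal H$ with $|\{\xi\in X\mid g(\xi)\in h(\xi)\}|=\theta$. $\mathrm{cf}([\lambda]^\theta,\subseteq)$ is the least size of $\mathcal Y\subseteq[\lambda]^\theta$ such that every $X\in[\lambda]^\theta$ is contained in some member of $\mathcal Y$; $\mathrm{cf}([\lambda]^\theta,\supseteq)$ is the least size of $\mathcal Y\subseteq[\lambda]^\theta$ such that every $X\in[\lambda]^\theta$ contains some member of $\mathcal Y$. *)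

(* cardinal comparisons of sets via
   classical/cardinality.v ([A #<= B], [A #= B]). Cardinals are
   represented by (the full sets of) types. *)
From mathcomp Require Import all_boot.
From mathcomp Require Import boolp classical_sets cardinality.
Set Implicit Arguments. Unset Strict Implicit. Unset Printing Implicit Defensive.
Local Open Scope classical_set_scope.
Local Open Scope card_scope.

Definition card_lt {T U : Type} (A : set T) (B : set U) : Prop :=
  (A #<= B) /\ ~ (B #<= A).

Definition infinite_regular (Th : Type) : Prop :=
  infinite_set [set: Th] /\
  forall (I : set Th) (F : Th -> set Th),
    card_lt I [set: Th] ->
    (forall i, I i -> card_lt (F i) [set: Th]) ->
    card_lt (\bigcup_(i in I) F i) [set: Th].

Definition sub_card (Th L : Type) (X : set L) : Prop := X #= [set: Th].

(* Y witnesses the definition of m(theta, lambda) *)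
Definition m_family (Th L : Type) (Y : set (set L)) : Prop :=
  (forall y, Y y -> sub_card Th y) /\
  forall X : set L, sub_card Th X ->
    exists y, Y y /\ sub_card Th (X `&` y).

(* Y witnesses cf([lambda]^theta, subseteq) *)
Definition cf_sub_family (Th L : Type) (Y : set (set L)) : Prop :=
  (forall y, Y y -> sub_card Th y) /\
  forall X : set L, sub_card Th X -> exists y, Y y /\ X `<=` y.

(* Y witnesses cf([lambda]^theta, supseteq) *)
Definition cf_sup_family (Th L : Type) (Y : set (set L)) : Prop :=
  (forall y, Y y -> sub_card Th y) /\
  forall X : set L, sub_card Th X -> exists y, Y y /\ y `<=` X.

(* H witnesses the definition of m(Delta, lambda, theta, chi), with
   Delta = D, lambda = V, theta = Th, chi = C: a family of functions
   Delta -> [lambda]^{<chi} such that for every X in [Delta]^theta and every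
   g : X -> lambda some h in H has |{xi in X | g xi in h xi}| = theta.
   (g is taken total on D; V is nonempty in all uses, so any g : X -> V
   extends to D.) *)
Definition m4_family (D V Th C : Type) (H : set (D -> set V)) : Prop :=
  (forall h, H h -> forall xi, card_lt (h xi) [set: C]) /\
  forall X : set D, sub_card Th X ->
    forall g : D -> V,
      exists h, H h /\ sub_card Th [set xi | X xi /\ h xi (g xi)].

From mathcomp Require Import all_boot.
From mathcomp Require Import boolp classical_sets functions cardinality.
Set Implicit Arguments. Unset Strict Implicit. Unset Printing Implicit Defensive.
Local Open Scope classical_set_scope.
Local Open Scope card_scope.

(* (1) The members of an m(theta, lambda)-family cover all of lambda but fewer
   than theta points (theta points outside their union would meet none of
   them), so lambda <= |Y| * theta, i.e. lambda <= |Y|; cofinal families for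
   either inclusion are m-families.
   (2) The union of the values of h : theta -> [lambda]^{<chi}, enlarged by a
   fixed theta-sized set, has size theta because chi <= theta^+.
   (3) The first inequality restricts along an embedding theta -> lambda.  For
   the second, given X and g pick y in Y meeting X in theta points.  If g is
   constant on theta of them, a constant singleton function works.  Otherwise
   regularity of theta makes g[X cap y] of size theta, so some y' in Y meets
   it in theta points; enumerating y and y' by theta turns g into a function
   theta -> theta handled by the small family. *)

(** * Cardinal arithmetic *)

Lemma card_le_injon T U (x0 : T) (A : set T) (B : set U) : A x0 -> A #<= B ->
  exists2 f : T -> U, {homo f : x / A x >-> B x} & {in A &, injective f}.
Proof.
move=> Ax0; elim/Ppointed: U => U in B *.
  by rewrite emptyE => /eqP A0; rewrite A0 in Ax0.
by move=> /pcard_leP/injfunPex.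
Qed.

Lemma card_le_of_injon T U (A : set T) (B : set U) (f : T -> U) :
  {homo f : x / A x >-> B x} -> {in A &, injective f} -> A #<= B.
Proof.
move=> fAB finj; have [F] : $|{injfun A >-> B}| by apply/injfunPex; exists f.
exact: inj_card_le.
Qed.

Lemma card_le_surj T U (x0 : T) (A : set T) (B : set U) :
  A #<= B -> exists g : U -> T, A `<=` g @` B.
Proof.
by move=> /pfcard_geP[->|[g]]; [exists (fun=> x0) | exists g; exact: 'surj_g].
Qed.

Lemma card_le_of_surj T U (A : set T) (B : set U) (g : U -> T) :
  A `<=` g @` B -> A #<= B.
Proof.
by move=> AgB; exact: card_le_trans (subset_card_le AgB) (card_image_le g B).
Qed.

Lemma card_eq_range T U (t0 : T) (B : set U) : [set: T] #= B ->
  exists2 f : T -> U, injective f & range f = B.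
Proof.
elim/Ppointed: U => U in B *.
  by rewrite emptyE => /eqP/seteqP[/(_ t0 I)].
move=> /pcard_eqP/bijPex[f [fB finj fsurj]]; exists f; first exact: in2TT finj.
by apply/seteqP; split; [move=> _ [x _ <-]; exact: fB | exact: fsurj].
Qed.

Lemma card_le_infinite T U (A : set T) (B : set U) :
  A #<= B -> infinite_set A -> infinite_set B.
Proof. by move=> AB Ainf /(card_le_finite AB). Qed.

Lemma card_bool_le T (M : set T) : infinite_set M -> [set: bool] #<= M.
Proof.
move=> /infiniteP; apply: card_le_trans.
by apply: (@card_le_of_injon _ _ _ _ nat_of_bool) => // -[] [].
Qed.

Lemma bigcup_chain_injective T U (F : set (set T)) (f : T -> U) :
  total_on F subset -> (forall G, F G -> {in G &, injective f}) ->
  {in \bigcup_(G in F) G &, injective f}.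
Proof.
move=> Ftot Finj x y /set_mem[G FG Gx] /set_mem[G' FG' G'y].
have [GG'|G'G] := Ftot G G' FG FG'.
- by apply: (Finj G') => //; apply/mem_set; [exact: GG'|].
- by apply: (Finj G) => //; apply/mem_set; [|exact: G'G].
Qed.

Section cardinal_comparability.
Variables (T U : Type) (A : set T) (B : set U).

Definition partial_bij (G : set (T * U)) :=
  [/\ G `<=` A `*` B, {in G &, injective fst} & {in G &, injective snd}].

Lemma partial_bij_bigcup (F : set (set (T * U))) :
  F `<=` partial_bij -> total_on F subset -> partial_bij (\bigcup_(G in F) G).
Proof.
move=> Fbij Ftot; split.
- by move=> p [G /Fbij[GAB _ _] /GAB].
- by apply: bigcup_chain_injective => // G /Fbij[].
- by apply: bigcup_chain_injective => // G /Fbij[].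
Qed.

Lemma partial_bij_setU1 G a b : partial_bij G -> A a -> B b ->
  ~ (fst @` G) a -> ~ (snd @` G) b -> partial_bij (G `|` [set (a, b)]).
Proof.
move=> [GAB Gfst Gsnd] Aa Bb Ga Gb; split.
- by move=> p [/GAB //|->].
- move=> p q /set_mem[Gp|->] /set_mem[Gq|->] //= pq.
  + by apply: Gfst => //; exact: mem_set.
  + by case: Ga; exists p.
  + by case: Ga; exists q.
- move=> p q /set_mem[Gp|->] /set_mem[Gq|->] //= pq.
  + by apply: Gsnd => //; exact: mem_set.
  + by case: Gb; exists p.
  + by case: Gb; exists q.
Qed.

Lemma partial_bij_card_le G : partial_bij G -> A `<=` fst @` G -> A #<= B.
Proof.
move=> [GAB _ Gsnd] AG; apply: card_le_trans (card_le_of_surj AG) _.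
by apply: card_le_of_injon Gsnd => p /GAB[].
Qed.

Lemma partial_bij_card_ge G : partial_bij G -> B `<=` snd @` G -> B #<= A.
Proof.
move=> [GAB Gfst _] BG; apply: card_le_trans (card_le_of_surj BG) _.
by apply: card_le_of_injon Gfst => p /GAB[].
Qed.

End cardinal_comparability.

Lemma card_le_total T U (A : set T) (B : set U) : A #<= B \/ B #<= A.
Proof.
have [G [Gbij Gmax]] := Zorn_bigcup (@partial_bij_bigcup _ _ A B).
have [AG|/existsNP[a /not_implyP[Aa Ga]]] := pselect (A `<=` fst @` G).
  by left; exact: partial_bij_card_le Gbij AG.
have [BG|/existsNP[b /not_implyP[Bb Gb]]] := pselect (B `<=` snd @` G).
  by right; exact: partial_bij_card_ge Gbij BG.
exfalso; apply: Gmax (partial_bij_setU1 Gbij Aa Bb Ga Gb).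
split; first exact: subsetUl.
by move=> /(_ (a, b) (or_intror erefl)) Gab; apply: Ga; exists (a, b).
Qed.

Lemma card_ltNge T U (A : set T) (B : set U) : ~ (B #<= A) -> card_lt A B.
Proof. by move=> nBA; split=> //; have [|] := card_le_total A B. Qed.

Lemma card_le_lt_trans T U V (A : set T) (B : set U) (C : set V) :
  A #<= B -> card_lt B C -> card_lt A C.
Proof.
move=> AB [BC nCB]; split; first exact: card_le_trans AB BC.
by move=> CA; apply: nCB; exact: card_le_trans CA AB.
Qed.

Lemma card_setX_le T1 T2 U1 U2
    (A : set T1) (B : set T2) (A' : set U1) (B' : set U2) :
  A #<= A' -> B #<= B' -> A `*` B #<= A' `*` B'.
Proof.
have [[[a0 b0] _]|/nonemptyPn->] := pselect (A `*` B !=set0); last first.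
  by move=> _ _; exact: card_ge0.
move=> /(card_le_surj a0)[f AfA'] /(card_le_surj b0)[g BgB'].
apply: (@card_le_of_surj _ _ _ _ (fun p => (f p.1, g p.2))) => -[a b] [/= Aa Bb].
by have [[a' A'a' <-] [b' B'b' <-]] := (AfA' a Aa, BgB' b Bb); exists (a', b').
Qed.

Lemma card_bigcup_le I0 T V (I : set I0) (F : I0 -> set T) (M : set V) :
  (forall i, I i -> F i #<= M) -> \bigcup_(i in I) F i #<= I `*` M.
Proof.
have [[x0 _]|/nonemptyPn->] := pselect (\bigcup_(i in I) F i !=set0); last first.
  by move=> _; exact: card_ge0.
move=> FM; have /choice[g gP] : forall i, exists g : V -> T, I i -> F i `<=` g @` M.
  move=> i; have [Ii|nIi] := pselect (I i); last by exists (fun=> x0).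
  by have [g FgM] := card_le_surj x0 (FM i Ii); exists g.
apply: (@card_le_of_surj _ _ _ _ (fun p => g p.1 p.2)) => x [i Ii Fix].
by have [m Mm <-] := gP i Ii x Fix; exists (i, m).
Qed.

Lemma card_setU_le T V (A B : set T) (M : set V) :
  [set: bool] #<= M -> M `*` M #<= M -> A #<= M -> B #<= M -> A `|` B #<= M.
Proof.
move=> boolM MM AM BM.
have AB_bigcup : A `|` B `<=` \bigcup_(i in [set: bool]) (if i then A else B).
  by move=> x [Ax|Bx]; [exists true|exists false].
apply: card_le_trans (subset_card_le AB_bigcup) _.
apply: card_le_trans (card_bigcup_le (M := M) _) _; first by case.
exact: card_le_trans (card_setX_le boolM (card_lexx M)) MM.
Qed.

Section square_coding.
Variables (T : Type) (A : set T).

(* G relates pairs to codes; unlike a bijection S * S -> S onto the set S of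
   codes, this notion is preserved by unions of chains. *)
Definition square_coding (G : set ((T * T) * T)) :=
  [/\ snd @` G `<=` A, {in G &, injective snd} &
      forall a b, (snd @` G) a -> (snd @` G) b -> (fst @` G) (a, b)].

Lemma square_coding_card G : square_coding G ->
  (snd @` G) `*` (snd @` G) #<= snd @` G.
Proof.
move=> [_ Ginj Gcode]; apply: (@card_le_trans _ _ _ G).
  by apply: card_le_of_surj => -[a b] [/= Sa Sb]; exact: Gcode.
by apply: card_le_of_injon Ginj => q Gq; exists q.
Qed.

(* The empty relation is admitted so that Zorn's lemma covers the empty chain. *)
Definition infinite_square_coding G :=
  square_coding G /\ (G = set0 \/ infinite_set (snd @` G)).

Lemma infinite_square_coding_bigcup F : F `<=` infinite_square_coding ->
  total_on F subset -> infinite_square_coding (\bigcup_(G in F) G).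
Proof.
move=> Fcode Ftot; split; first split.
- move=> _ [q [G FG Gq] <-].
  by have [[GA _ _] _] := Fcode G FG; apply: GA; exists q.
- by apply: bigcup_chain_injective => // G /Fcode[[]].
- move=> a b [qa [G FG Gqa] <-] [qb [G' FG' G'qb] <-].
  have [K [FK GK G'K]] : exists K, [/\ F K, G `<=` K & G' `<=` K].
    by have [GG'|G'G] := Ftot G G' FG FG'; [exists G'|exists G]; split.
  have [[_ _ Kcode] _] := Fcode K FK.
  have [p Kp <-] := Kcode _ _ (imageP snd (GK _ Gqa)) (imageP snd (G'K _ G'qb)).
  by exists p => //; exists K.
have [[G [FG [q Gq]]]|FG0] := pselect (exists G, F G /\ G !=set0).
  right; have [_ [G0|Ginf]] := Fcode G FG; first by rewrite G0 in Gq.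
  by apply: sub_infinite_set Ginf => _ [p Gp <-]; exists p => //; exists G.
left; apply/seteqP; split=> // q [G FG Gq].
by apply: FG0; exists G; split=> //; exists q.
Qed.

Lemma square_coding_nat : infinite_set A ->
  exists2 G, square_coding G & infinite_set (snd @` G).
Proof.
move=> /infiniteP/(@card_le_injon _ _ 0%N setT _ I)[n nA /in2TT n_inj].
have /card_eqPle[] := card_nat2.
move=> /(@card_le_injon _ _ (0, 0)%N setT _ I)[pi _ /in2TT pi_inj] natXnat.
pose G := (fun ij => ((n ij.1, n ij.2), n (pi ij))) @` [set: nat * nat].
exists G; first split.
- by move=> _ [_ [ij _ <-] <-]; exact: nA.
- by move=> _ _ /set_mem[ij _ <-] /set_mem[kl _ <-] /= /n_inj/pi_inj->.
- move=> _ _ [_ [ij _ <-] <-] [_ [kl _ <-] <-] /=.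
  exists ((n (pi ij), n (pi kl)), n (pi (pi ij, pi kl))) => //.
  by exists (pi ij, pi kl).
apply/infiniteP; apply: card_le_trans natXnat _.
apply: (@card_le_of_injon _ _ _ _ (fun ij => n (pi ij))) => [ij _|ij kl _ _].
  by exists ((n ij.1, n ij.2), n (pi ij)) => //; exists ij.
by move=> /n_inj/pi_inj.
Qed.

Lemma square_coding_extend G : square_coding G -> infinite_set (snd @` G) ->
  snd @` G #<= A `\` snd @` G ->
  exists2 G', infinite_square_coding G' & G `<` G'.
Proof.
set S := snd @` G => Gcode Sinf SAS.
have [s0 Ss0] := infinite_setN0 Sinf.
have [d dAS d_inj] := card_le_injon Ss0 SAS.
pose D := d @` S.
have DS : D #<= S by have /card_eqPle[] := inj_card_eq d_inj.
have DSn x : D x -> A x /\ ~ S x by move=> [s Ss <-]; exact: dAS.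
have SDS : S `|` D #<= S.
  apply: card_setU_le (card_lexx S) DS.
  - exact: card_bool_le.
  - exact: square_coding_card.
have SDX_D : (S `|` D) `*` (S `|` D) #<= D.
  apply: card_le_trans (card_setX_le SDS SDS) _.
  apply: card_le_trans (square_coding_card Gcode) _.
  by have /card_eqPle[] := inj_card_eq d_inj.
have SDs0 : ((S `|` D) `*` (S `|` D)) (s0, s0) by split; left.
have [code codeD code_inj] := card_le_injon SDs0 SDX_D.
(* D is a copy of S disjoint from it, and |S cup D|^2 = |S| leaves room to
   give every pair from S cup D a fresh code in D. *)
pose G' := G `|` (fun p => (p, code p)) @` ((S `|` D) `*` (S `|` D)).
have codeG' p : ((S `|` D) `*` (S `|` D)) p -> G' (p, code p).
  by move=> SDp; right; exists p.
have G'SD : snd @` G' `<=` S `|` D.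
  by move=> _ [q [Gq|[p SDp <-]] <-]; [left; exists q|right; exact: codeD].
have [GA Ginj _] := Gcode.
exists G'; last first.
  split; first exact: subsetUl.
  move=> /(_ _ (codeG' _ SDs0)) Gc.
  by have [_] := DSn _ (codeD _ SDs0); apply; exists ((s0, s0), code (s0, s0)).
split; last first.
  by right; apply: sub_infinite_set Sinf => _ [q Gq <-]; exists q => //; left.
split.
- move=> c /G'SD[Sc|/DSn[] //]; exact: GA.
- move=> q q' /set_mem[Gq|[p SDp <-]] /set_mem[Gq'|[p' SDp' <-]] /=.
  + by apply: Ginj; exact: mem_set.
  + by move=> qc; have [_ []] := DSn _ (codeD _ SDp'); rewrite -qc; exists q.
  + by move=> qc; have [_ []] := DSn _ (codeD _ SDp); rewrite qc; exists q'.
  + by move=> /code_inj-> //; exact: mem_set.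
- move=> a b /G'SD SDa /G'SD SDb.
  by exists ((a, b), code (a, b)) => //; exact: codeG'.
Qed.

End square_coding.

Lemma card_setXX_le T (A : set T) : infinite_set A -> A `*` A #<= A.
Proof.
move=> Ainf; have [G [[Gcode Ginf] Gmax]] :=
  Zorn_bigcup (@infinite_square_coding_bigcup _ A).
have {}Ginf : infinite_set (snd @` G).
  case: Ginf => // G0; have [G1 G1code G1inf] := square_coding_nat Ainf.
  have [_ [q G1q _]] := infinite_setN0 G1inf.
  exfalso; apply: (Gmax G1); last by split=> //; right.
  by rewrite G0; split=> // /(_ q G1q).
have [ASS|SAS] := card_le_total (A `\` snd @` G) (snd @` G); last first.
  have [G' G'code GG'] := square_coding_extend Gcode Ginf SAS.
  by case: (Gmax G' GG' G'code).
have [GA _ _] := Gcode.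
have AS : A #<= snd @` G.
  have := card_setU_le (card_bool_le Ginf) (square_coding_card Gcode)
    (card_lexx _) ASS.
  apply: card_le_trans; apply: subset_card_le => x Ax.
  by have [Sx|nSx] := pselect ((snd @` G) x); [left|right].
apply: card_le_trans (card_setX_le AS AS) _.
exact: card_le_trans (square_coding_card Gcode) (subset_card_le GA).
Qed.

Lemma card_setU_le_infinite T V (A B : set T) (M : set V) :
  infinite_set M -> A #<= M -> B #<= M -> A `|` B #<= M.
Proof.
by move=> Minf; apply: card_setU_le (card_bool_le Minf) (card_setXX_le Minf).
Qed.

Lemma card_setX_le_infinite T1 T2 V (A : set T1) (B : set T2) (M : set V) :
  infinite_set M -> A #<= M -> B #<= M -> A `*` B #<= M.
Proof.
move=> Minf AM BM.
exact: card_le_trans (card_setX_le AM BM) (card_setXX_le Minf).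
Qed.

Lemma card_lt_set1 C T (v : T) :
  [set: bool] #<= [set: C] -> card_lt [set v] [set: C].
Proof.
move=> boolC; split.
  apply: card_le_trans boolC.
  apply: (@card_le_of_injon _ _ _ _ (fun=> true)) => //.
  by move=> x y /set_mem-> /set_mem->.
move=> /(card_le_trans boolC)/(@card_le_injon _ _ true setT _ I)[f fv f_inj].
have := f_inj true false; rewrite !inE (fv true I) (fv false I).
by move=> /(_ I I erefl).
Qed.

Lemma card_lt_le_of_small C T V (M : set V) :
  (forall S : set C, card_lt S [set: C] -> S #<= M) ->
  forall A : set T, card_lt A [set: C] -> A #<= M.
Proof.
move=> small A AC; have [[x0 Ax0]|/nonemptyPn->] := pselect (A !=set0); last first.
  exact: card_ge0.
have [f _ f_inj] := card_le_injon Ax0 AC.1.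
have /card_eqPle[fAA AfA] := inj_card_eq f_inj.
exact: card_le_trans AfA (small _ (card_le_lt_trans fAA AC)).
Qed.

Lemma sub_card_sub Th T (X Z : set T) :
  sub_card Th X -> Z `<=` X -> [set: Th] #<= Z -> sub_card Th Z.
Proof.
move=> /card_eqPle[XTh _] ZX ThZ; apply: Cantor_Bernstein ThZ.
exact: card_le_trans (subset_card_le ZX) XTh.
Qed.

Lemma regular_image_ge Th T V (Z : set T) (f : T -> V) : infinite_regular Th ->
  sub_card Th Z -> (forall v, card_lt [set x | Z x /\ f x = v] [set: Th]) ->
  [set: Th] #<= f @` Z.
Proof.
move=> [Thinf Threg] ZTh fibers; have [t0 _] := infinite_setN0 Thinf.
have [e e_inj eZ] := card_eq_range t0 (card_esym ZTh).
pose rep := 'pinv_(fun=> t0) [set: Th] (f \o e).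
pose F t := [set s | f (e s) = f (e t)].
have Fsmall t : card_lt (F t) [set: Th].
  apply: card_le_lt_trans (fibers (f (e t))).
  apply: (@card_le_of_injon _ _ _ _ e) => [s Fs|s s' _ _ /e_inj//].
  by split=> //; rewrite -eZ; exists s.
have [|/card_ltNge I_lt] := pselect ([set: Th] #<= rep @` (f @` Z)).
  by move/card_le_trans; apply; exact: card_image_le.
have [_ []] := Threg _ F I_lt (fun t _ => Fsmall t).
apply: subset_card_le => t _; exists (rep (f (e t))); last first.
  by apply/esym/(@pinvK _ _ _ _ (f \o e)); rewrite inE; exists t.
by exists (f (e t)) => //; exists (e t) => //; rewrite -eZ; exists t.
Qed.

(** * The invariants m(theta, lambda) and m(Delta, lambda, theta, chi) *)

Lemma m_family_card_le Th L (Y : set (set L)) V (M : set V) :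
  infinite_set [set: Th] -> m_family Th Y ->
  infinite_set M -> Y #<= M -> [set: Th] #<= M -> [set: L] #<= M.
Proof.
move=> Thinf [Ysub Ycov] Minf YM ThM; have [t0 _] := infinite_setN0 Thinf.
pose U := \bigcup_(y in Y) y.
have UM : U #<= M.
  apply: card_le_trans (card_bigcup_le (M := M) _) _.
    by move=> y /Ysub/card_eqPle[yTh _]; exact: card_le_trans yTh ThM.
  exact: card_setX_le_infinite.
have [ThU|/card_ltNge[UTh _]] := pselect ([set: Th] #<= ~` U).
  have [e eU e_inj] := @card_le_injon _ _ t0 setT _ I ThU.
  have [y [Yy /card_eqPle[_]]] := Ycov (range e) (inj_card_eq e_inj).
  have -> : range e `&` y = set0.
    by apply/seteqP; split=> // _ [[t _ <-] yet]; apply: (eU t I); exists y.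
  by move/card_le0P/seteqP => -[/(_ t0 I)].
apply: card_le_trans (card_setU_le_infinite Minf UM (card_le_trans UTh ThM)).
by apply: subset_card_le => x _; have [Ux|nUx] := pselect (U x); [left|right].
Qed.

Lemma m_family_card_ge Th L (Y : set (set L)) :
  infinite_set [set: Th] -> card_lt [set: Th] [set: L] -> m_family Th Y ->
  [set: L] #<= Y.
Proof.
move=> Thinf [_ nLTh] Yfam.
have [YTh|ThY] := card_le_total Y [set: Th].
  by exfalso; apply: nLTh; exact: (m_family_card_le Thinf Yfam Thinf YTh).
exact: (m_family_card_le Thinf Yfam (card_le_infinite ThY Thinf) (card_lexx _) ThY).
Qed.

Lemma m_family_of_cf_sub Th L (Z : set (set L)) :
  cf_sub_family Th Z -> m_family Th Z.
Proof.
move=> [Zsub Zcov]; split=> // X XTh.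
by have [y [Zy Xy]] := Zcov X XTh; exists y; rewrite setIidl.
Qed.

Lemma m_family_of_cf_sup Th L (Z : set (set L)) :
  cf_sup_family Th Z -> m_family Th Z.
Proof.
move=> [Zsub Zcov]; split=> // X XTh.
have [y [Zy yX]] := Zcov X XTh.
by exists y; rewrite setIidr //; split=> //; exact: Zsub.
Qed.

Lemma m_family_of_m4_family Th L C (H : set (Th -> set L)) :
  infinite_set [set: Th] -> [set: Th] #<= [set: L] ->
  (forall S : set C, card_lt S [set: C] -> S #<= [set: Th]) ->
  m4_family Th C H -> exists Y : set (set L), m_family Th Y /\ Y #<= H.
Proof.
move=> Thinf ThL small [Hsmall Hcov]; have [t0 _] := infinite_setN0 Thinf.
have [e _ /in2TT e_inj] := @card_le_injon _ _ t0 setT _ I ThL.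
have /card_eqPle[eTh The] : range e #= [set: Th] := inj_card_eq (in2W e_inj).
pose cover (h : Th -> set L) := \bigcup_(t in [set: Th]) h t `|` range e.
exists (cover @` H); split; last exact: card_image_le.
split.
  move=> _ [h Hh <-]; apply: Cantor_Bernstein; last first.
    by apply: card_le_trans The (subset_card_le _); exact: subsetUr.
  apply: card_setU_le_infinite => //.
  apply: card_le_trans (card_bigcup_le _) (card_setX_le_infinite Thinf _ _) => //.
  by move=> t _; exact: card_lt_le_of_small small _ (Hsmall h Hh t).
move=> X /[dup] XTh /card_eqPle[_ ThX].
have [g gX /in2TT g_inj] := @card_le_injon _ _ t0 setT _ I ThX.
have [h [Hh /card_eqPle[_ ThS]]] := Hcov [set: Th] (card_eqxx _) g.
exists (cover h); split; first by exists h.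
apply: sub_card_sub XTh _ _; first exact: subIsetl.
apply: card_le_trans ThS (card_le_of_injon _ (in2W g_inj)) => t [_ hgt].
by split; [exact: gX | left; exists t].
Qed.

Lemma m4_family_restrict Th L C (H : set (L -> set L)) (t0 : Th) :
  [set: Th] #<= [set: L] -> m4_family Th C H ->
  exists H' : set (Th -> set Th), m4_family Th C H' /\ H' #<= H.
Proof.
move=> ThL [Hsmall Hcov].
have [e _ /in2TT e_inj] := @card_le_injon _ _ t0 setT _ I ThL.
pose einv := 'pinv_(fun=> t0) [set: Th] e.
have einvK t : einv (e t) = t by apply: pinvKV; rewrite ?inE //; exact: in2W.
pose restrict (h : L -> set L) t := e @^-1` h (e t).
exists (restrict @` H); split; last exact: card_image_le.
split.
  move=> _ [h Hh <-] t; apply: card_le_lt_trans (Hsmall h Hh (e t)).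
  by apply: card_le_of_injon (in2W e_inj) => s.
move=> X XTh g; have eXTh : sub_card Th (e @` X).
  exact: card_eq_trans (inj_card_eq (in2W e_inj)) XTh.
have [h [Hh /card_eqPle[_ ThS]]] := Hcov _ eXTh (e \o g \o einv).
exists (restrict h); split; first by exists h.
apply: sub_card_sub XTh (fun t => @proj1 _ _) _.
apply: card_le_trans ThS (card_le_of_surj _) => _ [[t Xt <-]] /=.
by rewrite einvK => hgt; exists t.
Qed.

Section lift.
Variables (Th L C : Type) (t0 : Th) (H1 : set (Th -> set Th)) (Y : set (set L)).
Hypotheses (Threg : infinite_regular Th) (ThL : card_lt [set: Th] [set: L]).
Hypotheses (boolC : [set: bool] #<= [set: C]) (H1fam : m4_family Th C H1).
Hypothesis Yfam : m_family Th Y.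
Variable phi : set L -> Th -> L.
Hypothesis phiY : forall y, Y y -> injective (phi y) /\ range (phi y) = y.

Let psi y := 'pinv_(fun=> t0) [set: Th] (phi y).

Let phiK y x : Y y -> y x -> phi y (psi y x) = x.
Proof. by move=> /phiY[_ yE] yx; apply: pinvK; rewrite inE yE. Qed.

Definition lift_fun y y' (h : Th -> set Th) (x : L) : set L :=
  phi y' @` h (psi y x).

Definition lift_family : set (L -> set L) :=
  [set lift_fun q.1.1 q.1.2 q.2 | q in (Y `*` Y) `*` H1] `|`
  [set (fun=> [set v]) | v in [set: L]].

Lemma lift_family_card : lift_family #<= H1 \/ lift_family #<= Y.
Proof.
have Thinf := Threg.1.
have LY := m_family_card_ge Thinf ThL Yfam.
have Yinf : infinite_set Y := card_le_infinite (card_le_trans ThL.1 LY) Thinf.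
have bound V (M : set V) :
    infinite_set M -> Y #<= M -> H1 #<= M -> lift_family #<= M.
  move=> Minf YM H1M; apply: card_setU_le_infinite => //.
    apply: card_le_trans (card_image_le _ _) _.
    by apply: card_setX_le_infinite => //; exact: card_setX_le_infinite.
  exact: card_le_trans (card_image_le _ _) (card_le_trans LY YM).
have [YH1|H1Y] := card_le_total Y H1.
  by left; exact: bound (card_le_infinite YH1 Yinf) YH1 (card_lexx _).
by right; exact: bound.
Qed.

Lemma lift_family_small h : lift_family h -> forall x, card_lt (h x) [set: C].
Proof.
rewrite /lift_family => -[[[[y y'] h1] [_ H1h1] <-]|[v _ <-]] x /=.
  exact: card_le_lt_trans (card_image_le _ _) (H1fam.1 h1 H1h1 _).
exact: card_lt_set1.
Qed.

Lemma lift_fun_cover y y' (X1 : set L) g : Y y -> Y y' -> X1 `<=` y ->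
  (forall x, X1 x -> y' (g x)) -> sub_card Th X1 ->
  exists2 h1, H1 h1 &
    [set: Th] #<= [set x | X1 x /\ lift_fun y y' h1 x (g x)].
Proof.
move=> Yy Yy' X1y gX1 X1Th.
have psi_inj : {in X1 &, injective (psi y)}.
  move=> x x' /set_mem/X1y yx /set_mem/X1y yx' e.
  by rewrite -(phiK Yy yx) -(phiK Yy yx') e.
have Z1Th : sub_card Th (psi y @` X1) := card_eq_trans (inj_card_eq psi_inj) X1Th.
have [h1 [H1h1 /card_eqPle[_ ThS1]]] :=
  H1fam.2 _ Z1Th (fun t => psi y' (g (phi y t))).
exists h1 => //; apply: card_le_trans ThS1 (card_le_of_injon _ (in2W (phiY Yy).1)).
move=> _ [[x X1x <-]]; rewrite phiK //; last exact: X1y.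
by move=> hx; split=> //; exists (psi y' (g x)); rewrite // phiK //; exact: gX1.
Qed.

Lemma lift_family_cover X g : sub_card Th X ->
  exists h, lift_family h /\ sub_card Th [set x | X x /\ h x (g x)].
Proof.
move=> XTh; have [y [Yy X0Th]] := Yfam.2 X XTh.
have [[v ThF]|large] :=
  pselect (exists v, [set: Th] #<= [set x | (X `&` y) x /\ g x = v]).
  exists (fun=> [set v]); split; first by right; exists v.
  apply: sub_card_sub XTh (fun x => @proj1 _ _) (card_le_trans ThF _).
  by apply: subset_card_le => x [[Xx _] gx].
have /card_eqPle[X0le _] := X0Th.
have WTh : sub_card Th (g @` (X `&` y)).
  apply: Cantor_Bernstein (card_le_trans (card_image_le _ _) X0le) _.
  apply: regular_image_ge Threg X0Th _ => v; apply: card_ltNge => ThF.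
  by apply: large; exists v.
have [y' [Yy' /card_eqPle[_ ThWy']]] := Yfam.2 _ WTh.
pose X1 := [set x | (X `&` y) x /\ y' (g x)].
have X1Th : sub_card Th X1.
  apply: sub_card_sub X0Th (fun x => @proj1 _ _) (card_le_trans ThWy' _).
  by apply: card_le_of_surj => _ [[x X0x <-] y'gx]; exists x.
have X1y : X1 `<=` y by move=> x [[]].
have [h1 H1h1 ThS] := lift_fun_cover Yy Yy' X1y (fun x => @proj2 _ _) X1Th.
exists (lift_fun y y' h1); split; first by left; exists ((y, y'), h1).
apply: sub_card_sub XTh (fun x => @proj1 _ _) (card_le_trans ThS _).
by apply: subset_card_le => x [[[Xx _] _] hx].
Qed.

End lift.

Lemma m4_family_lift Th L C (H1 : set (Th -> set Th)) (Y : set (set L)) :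
  infinite_regular Th -> card_lt [set: Th] [set: L] ->
  [set: bool] #<= [set: C] -> m4_family Th C H1 -> m_family Th Y ->
  exists H : set (L -> set L), m4_family Th C H /\ (H #<= H1 \/ H #<= Y).
Proof.
move=> Threg ThL boolC H1fam Yfam; have [t0 _] := infinite_setN0 Threg.1.
have [e _ _] := @card_le_injon _ _ t0 setT _ I ThL.1.
have /choice[phi phiY] :
    forall y, exists f : Th -> L, Y y -> injective f /\ range f = y.
  move=> y; have [Yy|nYy] := pselect (Y y); last by exists e.
  by have [f] := card_eq_range t0 (card_esym (Yfam.1 y Yy)); exists f.
exists (lift_family t0 H1 Y phi); split; last exact: lift_family_card.
split; first exact: lift_family_small.
by move=> X XTh g; exact: (lift_family_cover t0 Threg H1fam Yfam phiY g XTh).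
Qed.

Theorem lemma2p4 (L Th C : Type) :
  infinite_set [set: L] ->
  infinite_regular Th ->
  card_lt [set: Th] [set: L] ->
  ([set: C] #= [set: bool] \/ infinite_set [set: C]) ->
  (* (1) lambda <= m(theta,lambda) <= min{cf(subseteq), cf(supseteq)} *)
  ((forall Y : set (set L), m_family Th Y -> [set: L] #<= Y) /\
   (forall Z : set (set L), cf_sub_family Th Z ->
      exists Y : set (set L), m_family Th Y /\ Y #<= Z) /\
   (forall Z : set (set L), cf_sup_family Th Z ->
      exists Y : set (set L), m_family Th Y /\ Y #<= Z)) /\
  (* (2) chi <= theta^+  ->  m(theta,lambda) <= m(theta,lambda,theta,chi);
     here chi <= theta^+ is expressed as: every subset of C of cardinality
     < |C| has cardinality <= |Th| *)
  ((forall S : set C, card_lt S [set: C] -> S #<= [set: Th]) ->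
   forall H : set (Th -> set L), m4_family Th C H ->
     exists Y : set (set L), m_family Th Y /\ Y #<= H) /\
  (* (3) m(theta,theta,theta,chi) <= m(lambda,lambda,theta,chi)
         <= max{m(theta,theta,theta,chi), m(theta,lambda)} *)
  ((forall H : set (L -> set L), m4_family Th C H ->
      exists H' : set (Th -> set Th), m4_family Th C H' /\ H' #<= H) /\
   (forall (H1 : set (Th -> set Th)) (Y : set (set L)),
      m4_family Th C H1 -> m_family Th Y ->
      exists H : set (L -> set L), m4_family Th C H /\ (H #<= H1 \/ H #<= Y))).
Proof.
(* The first hypothesis follows from the third. *)
move=> _ Threg ThL Cbool; have Thinf := Threg.1.
have [t0 _] := infinite_setN0 Thinf.
have boolC : [set: bool] #<= [set: C].
  by case: Cbool => [/card_eqPle[]|/card_bool_le].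
split; [split; [|split]|split; [|split]].
- by move=> Y; exact: m_family_card_ge.
- by move=> Z /m_family_of_cf_sub Zm; exists Z.
- by move=> Z /m_family_of_cf_sup Zm; exists Z.
- by move=> small H; exact: m_family_of_m4_family ThL.1 small.
- by move=> H; exact: m4_family_restrict t0 ThL.1.
- by move=> H1 Y; exact: m4_family_lift.
Qed.
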